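(* With notation: $\xi=e^{i\pi/5}$, $\tau=\frac{1+\sqrt5}{2}$, $L(n)=\{\sum_{j=0}^9 n_j\xi^j: n_j\in\mathbb{N}_0,\ \sum_j n_j\le n\}\cap\mathbb{R}$, $\mathbb{Z}[\tau]=\mathbb{Z}+\mathbb{Z}\tau$, $x\mapsto x'$ the automorphism $a+b\sqrt5\mapsto a-b\sqrt5$ of $\mathbb{Q}[\sqrt5]$, and $\Sigma(\Omega)=\{x\in\mathbb{Z}[\tau]:x'\in\Omega\}$: for every integer $n\ge3$, $L(n)$ is a proper subset of $\Sigma([-n,n])\cap[-n,n]$. *)

From HB Require Import structures.
From mathcomp Require Import all_boot all_order all_algebra all_field.
Set Implicit Arguments. Unset Strict Implicit. Unset Printing Implicit Defensive.
Import Order.TTheory GRing.Theory Num.Theory.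
Local Open Scope ring_scope.

(* xi = e^{i pi/5}: the 5th root of -1 with minimal non-negative argument. *)
Definition xi : algC := 5.-root (-1).

Definition tau : algC := (1 + sqrtC 5) / 2.
(* image of tau under the automorphism a + b sqrt5 |-> a - b sqrt5 *)
Definition tau' : algC := (1 - sqrtC 5) / 2.

Definition L (n : nat) (x : algC) : Prop :=
  x \is Num.real /\
  exists c : 'I_10 -> nat,
    (\sum_(j < 10) c j <= n)%N /\ x = \sum_(j < 10) (c j)%:R * xi ^+ j.

Definition Ztau (x : algC) : Prop := exists a b : int, x = a%:~R + b%:~R * tau.

Definition Sigma (Om : algC -> Prop) (x : algC) : Prop :=
  exists a b : int, x = a%:~R + b%:~R * tau /\ Om (a%:~R + b%:~R * tau').

Definition Icc (n : nat) (y : algC) : Prop :=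
  y \is Num.real /\ - (n%:R) <= y /\ y <= n%:R.

(* Since xi^5 = -1, an element x of L(n) is sum_(k < 5) d_k xi^k with
   sum_k |d_k| <= n.  Comparing x with its complex conjugate (xi^* = -xi^4), and
   using that 1 and tau are independent over Z (sqrt 5 is irrational), reality
   forces d_3 = -d_2 and d_4 = -d_1.  As xi - xi^4 = tau and xi^2 - xi^3 = tau - 1,
   x = d_0 + d_1 tau + d_2 (tau - 1), and x' is the same expression in tau'.  Both
   tau and tau' lie in (-1, 2), so |x|, |x'| <= |d_0| + 2|d_1| + 2|d_2| <= n.
   Conversely, by uniqueness of coordinates, a + b tau is in L(n) only if
   a = d_0 - d_2 and b = d_1 + d_2 with |d_0| + 2|d_1| + 2|d_2| <= n; the numbers
   2 tau - 1 = sqrt 5 (n = 3) and 3 tau - (n - 2) (n >= 4) lie in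
   Sigma([-n, n]) /\ [-n, n] but admit no such decomposition. *)

From HB Require Import structures.
From mathcomp Require Import all_boot all_order all_algebra all_field.
From mathcomp Require Import zify ring lra.
Set Implicit Arguments. Unset Strict Implicit. Unset Printing Implicit Defensive.
Import Order.TTheory GRing.Theory Num.Theory.
Local Open Scope ring_scope.

Lemma prime_mul_sqr_neq_sqr (p a b : nat) :
  prime p -> (0 < b)%N -> (p * b ^ 2 != a ^ 2)%N.
Proof.
move=> p_pr b_gt0; apply/eqP=> E.
have : (0 < a ^ 2)%N by rewrite -E muln_gt0 prime_gt0 // expn_gt0 b_gt0.
rewrite expn_gt0 orbF => a_gt0.
have := congr1 (logn p) E.
rewrite lognM ?expn_gt0 ?b_gt0 ?prime_gt0 // !lognX logn_prime // eqxx.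
by move/(congr1 odd); rewrite oddD !oddM.
Qed.

Lemma golden_bounds (R : realFieldType) (t : R) : t ^+ 2 = t + 1 -> -1 < t < 2.
Proof. by move=> t_golden; apply/andP; split; nra. Qed.

Lemma normr_golden_le2 (R : realFieldType) (t : R) :
  t ^+ 2 = t + 1 -> `|t| <= 2 /\ `|t - 1| <= 2.
Proof.
move=> /golden_bounds /andP[? ?].
by rewrite !ler_norml; split; apply/andP; split; lra.
Qed.

Lemma normr_comb_le (R : numDomainType) (t : R) (d0 d1 d2 : int) :
  `|t| <= 2 -> `|t - 1| <= 2 ->
  `|(d0 - d2)%:~R + (d1 + d2)%:~R * t| <= (`|d0| + 2 * `|d1| + 2 * `|d2|)%N%:R.
Proof.
move=> t_le2 t1_le2.
have -> : (d0 - d2)%:~R + (d1 + d2)%:~R * t = d0%:~R + d1%:~R * t + d2%:~R * (t - 1)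
  by rewrite intrB intrD; ring.
have normM_le (d : int) (s : R) : `|s| <= 2 -> `|d%:~R * s| <= (2 * `|d|)%N%:R.
  by move=> s_le2; rewrite normrM natrM [_ * _%:R]mulrC natr_absz intr_norm ler_wpM2l.
rewrite natrD; apply: le_trans (ler_normD _ _) _; rewrite lerD ?normM_le //.
rewrite natrD; apply: le_trans (ler_normD _ _) _.
by rewrite lerD ?normM_le // natr_absz intr_norm.
Qed.

Lemma golden_half (R : numFieldType) (s : R) :
  s ^+ 2 = 5 -> ((1 + s) / 2) ^+ 2 = (1 + s) / 2 + 1.
Proof.
move=> s_sqr; apply/eqP; rewrite -subr_eq0.
have -> : ((1 + s) / 2) ^+ 2 - ((1 + s) / 2 + 1) = (s ^+ 2 - 5) / 4 by field.
by rewrite s_sqr subrr mul0r.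
Qed.

Local Notation sqrt5 := (sqrtC (5 : algC)).

Lemma sqrt5_sqr : sqrt5 ^+ 2 = 5. Proof. exact: sqrtCK. Qed.

Lemma tau_sqr : tau ^+ 2 = tau + 1. Proof. exact: golden_half sqrt5_sqr. Qed.

Lemma tau'_sqr : tau' ^+ 2 = tau' + 1.
Proof. by apply: golden_half; rewrite sqrrN sqrt5_sqr. Qed.

Lemma tau_real : tau \is Num.real.
Proof. by rewrite /tau rpredM ?rpredD ?rpredV ?rpred1 ?realn ?sqrtC_real ?ler0n. Qed.

Lemma tau'_real : tau' \is Num.real.
Proof. by rewrite /tau' rpredM ?rpredB ?rpredV ?rpred1 ?realn ?sqrtC_real ?ler0n. Qed.

Lemma tau'_lt_tau : tau' < tau.
Proof.
by rewrite -subr_gt0 (_ : tau - tau' = sqrt5) ?sqrtC_gt0 ?ltr0n // /tau /tau'; field.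
Qed.

Lemma golden_rootsC (t : algC) : t ^+ 2 = t + 1 -> t = tau \/ t = tau'.
Proof.
move=> t_golden.
have : (t - tau) * (t - tau') = 0.
  have -> : (t - tau) * (t - tau') = t ^+ 2 - (t + 1) + (5 - sqrt5 ^+ 2) / 4
    by rewrite /tau /tau'; field.
  by rewrite t_golden sqrt5_sqr !subrr mul0r addr0.
by move/eqP; rewrite mulf_eq0 !subr_eq0 => /orP[] /eqP ->; [left | right].
Qed.

Lemma tau_coord_inj (a b a' b' : int) :
  a%:~R + b%:~R * tau = a'%:~R + b'%:~R * tau :> algC -> a = a' /\ b = b'.
Proof.
suff indep (p q : int) : p%:~R + q%:~R * tau = 0 :> algC -> p = 0 /\ q = 0.
  move=> E; suff /indep[/subr0_eq -> /subr0_eq ->] :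
    (a - a')%:~R + (b - b')%:~R * tau = 0 :> algC by [].
  by rewrite !intrB mulrBl addrACA -opprD E subrr.
move=> pq0.
have pq_sqr : 5 * q ^+ 2 = (2 * p + q) ^+ 2.
  apply: (@intr_inj algC); rewrite rmorphM !rmorphXn /=.
  have -> : (2 * p + q)%:~R = 2 * (p%:~R + q%:~R * tau) - q%:~R * sqrt5 :> algC.
    by rewrite /tau intrD intrM; field.
  by rewrite pq0 mulr0 sub0r sqrrN exprMn sqrt5_sqr mulrC.
have q0 : q = 0.
  apply/eqP; rewrite -absz_eq0 eqn0Ngt; apply/negP => q_gt0.
  have /eqP := congr1 absz pq_sqr.
  by rewrite abszM !abszX; apply/negP/prime_mul_sqr_neq_sqr.
by move: pq0; rewrite q0 mulr0z mul0r addr0 => /eqP; rewrite intr_eq0 => /eqP.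
Qed.

(* Inequalities between real algebraic numbers are proved in the real closed
   field algR, where lra and nra apply, and transported to algC along algRval. *)
Lemma golden_algR (t : algC) (t_real : t \is Num.real) :
  t ^+ 2 = t + 1 -> in_algR t_real ^+ 2 = in_algR t_real + 1.
Proof. by move=> t_golden; apply: val_inj. Qed.

Lemma golden_rootC_bounds (t : algC) :
  t \is Num.real -> t ^+ 2 = t + 1 -> -1 < t < 2.
Proof.
move=> t_real /(golden_algR t_real) /golden_bounds.
by rewrite -(rmorph_nat algRval) -(rmorphN1 algRval).
Qed.

Lemma golden_Sigma_Icc n (a b : int) :
  (forall t : algR, t ^+ 2 = t + 1 -> `|a%:~R + b%:~R * t| <= n%:R) ->
  Sigma (Icc n) (a%:~R + b%:~R * tau) /\ Icc n (a%:~R + b%:~R * tau).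
Proof.
move=> ab_le.
have Icc_root (t : algC) (t_real : t \is Num.real) :
    t ^+ 2 = t + 1 -> Icc n (a%:~R + b%:~R * t).
  move=> /(golden_algR t_real) /ab_le y_le.
  have -> : a%:~R + b%:~R * t = algRval (a%:~R + b%:~R * in_algR t_real).
    by rewrite rmorphD rmorphM !rmorph_int.
  split; first exact: algRvalP.
  have : `|algRval (a%:~R + b%:~R * in_algR t_real)| <= n%:R.
    by rewrite -(rmorph_nat algRval).
  by rewrite real_ler_norml ?algRvalP // => /andP[].
split; last exact: Icc_root tau_real tau_sqr.
by exists a, b; split; last exact: Icc_root tau'_real tau'_sqr.
Qed.

Lemma xi5 : xi ^+ 5 = -1. Proof. exact: rootCK. Qed.

Lemma xi_neq0 : xi != 0.
Proof. by rewrite rootC_eq0 // oppr_eq0 oner_eq0. Qed.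

Lemma conj_xiX k : (k <= 5)%N -> xi^* ^+ k = - xi ^+ (5 - k).
Proof.
move=> k_le5.
have xi_unit : xi^* * xi = 1.
  have /eqP : `|xi| ^+ 5 = 1 by rewrite -normrX xi5 normrN1.
  by rewrite pexpr_eq1 // => /eqP norm_xi; rewrite -normCKC norm_xi expr1n.
rewrite -[LHS]mulr1 -[1]opprK -xi5.
have -> : xi ^+ 5 = xi ^+ (5 - k) * xi ^+ k by rewrite -exprD subnK.
by rewrite mulrN mulrCA -exprMn xi_unit expr1n mulr1.
Qed.

Lemma Re_xi_ge : tau / 2 <= 'Re xi.
Proof.
have /andP[_ tau_lt2] := golden_rootC_bounds tau_real tau_sqr.
pose s := sqrtC (3 - tau).
have s_ge0 : 0 <= s.
  by rewrite sqrtC_ge0 subr_ge0 (le_trans (ltW tau_lt2)) // ler_nat.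
(* y = e^(i pi/5); by rootC_Re_max the principal root xi has the largest real
   part among the fifth roots of -1 in the closed upper half plane. *)
pose y := tau / 2 + 'i * (s / 2).
have y_root : y ^+ 2 - tau * y + 1 = 0.
  have -> : y ^+ 2 - tau * y + 1 = (4 - tau ^+ 2 + 'i ^+ 2 * s ^+ 2) / 4.
    by rewrite /y; field.
  rewrite sqrCi sqrtCK tau_sqr.
  by rewrite (_ : 4 - (tau + 1) + -1 * (3 - tau) = 0) ?mul0r //; ring.
have y5 : y ^+ 5 = -1.
  apply/eqP; rewrite -subr_eq0 opprK.
  have -> : y ^+ 5 + 1 = (y + 1) * ((y ^+ 2 - tau * y + 1) * (y ^+ 2 + (tau - 1) * y + 1)
                                    + (tau ^+ 2 - (tau + 1)) * y ^+ 2) by ring.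
  by rewrite y_root tau_sqr subrr !mul0r addr0 mulr0.
have tau2_real : tau / 2 \is Num.real by rewrite rpredM ?tau_real ?rpredV ?realn.
have s2_real : s / 2 \is Num.real by rewrite rpredM ?rpredV ?realn // ger0_real.
have := @rootC_Re_max _ 5 (-1) y isT y5.
by rewrite /y Re_rect ?Im_rect //; apply; rewrite divr_ge0 ?ler0n.
Qed.

Lemma xi_add1_neq0 : xi + 1 != 0.
Proof.
have /andP[tau_gtN1 _] := golden_rootC_bounds tau_real tau_sqr.
rewrite addr_eq0; apply/eqP => xi_N1; have := Re_xi_ge.
have /Creal_ReP -> : xi \is Num.real by rewrite xi_N1 rpredN rpred1.
rewrite xi_N1 ler_pdivrMr ?ltr0n // mulN1r => tau_leN2.
by have := lt_le_trans tau_gtN1 tau_leN2; rewrite ltrN2 ltrn1.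
Qed.

Lemma xi_sub_xi4 : xi - xi ^+ 4 = tau.
Proof.
set c := xi - xi ^+ 4.
have Phi10_xi : xi ^+ 4 - xi ^+ 3 + xi ^+ 2 - xi + 1 = 0.
  have : (xi + 1) * (xi ^+ 4 - xi ^+ 3 + xi ^+ 2 - xi + 1) = xi ^+ 5 + 1 by ring.
  by rewrite xi5 addNr; move/eqP; rewrite mulf_eq0 (negbTE xi_add1_neq0) => /eqP.
have c_golden : c ^+ 2 = c + 1.
  have -> : c ^+ 2 = c + 1 + (xi ^+ 4 - xi ^+ 3 + xi ^+ 2 - xi + 1)
                     + (xi ^+ 5 + 1) * (xi ^+ 3 - 2) by rewrite /c; ring.
  by rewrite Phi10_xi xi5 addNr mul0r !addr0.
have [//|c_tau'] := golden_rootsC c_golden.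
have : tau <= c.
  by have := Re_xi_ge; rewrite ReE -[xi^*]expr1 conj_xiX // ler_pM2r ?invr_gt0 ?ltr0n.
by rewrite c_tau' => /(lt_le_trans tau'_lt_tau); rewrite ltxx.
Qed.

Lemma xi2_sub_xi3 : xi ^+ 2 - xi ^+ 3 = tau - 1.
Proof.
have -> : tau - 1 = tau ^+ 2 - 2 by rewrite tau_sqr; ring.
have -> : xi ^+ 2 - xi ^+ 3
          = (xi - xi ^+ 4) ^+ 2 - 2 - (xi ^+ 5 + 1) * (xi ^+ 3 - 2) by ring.
by rewrite xi_sub_xi4 xi5 addNr mul0r subr0.
Qed.

Lemma xi2_add_xi3 : xi ^+ 2 + xi ^+ 3 = (xi + xi ^+ 4) * tau.
Proof.
have -> : xi ^+ 2 + xi ^+ 3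
          = (xi + xi ^+ 4) * (xi - xi ^+ 4) + xi ^+ 3 * (xi ^+ 5 + 1) by ring.
by rewrite xi_sub_xi4 xi5 addNr mulr0 addr0.
Qed.

Lemma xi_add_xi4_neq0 : xi + xi ^+ 4 != 0.
Proof.
apply: contra xi_add1_neq0 => /eqP xi_xi4_0.
have : xi ^+ 2 * (xi + 1) = 0.
  by rewrite mulrDr mulr1 -exprSr addrC xi2_add_xi3 xi_xi4_0 mul0r.
by move/eqP; rewrite mulf_eq0 expf_eq0 (negbTE xi_neq0).
Qed.

Lemma real_xi_comb (d0 d1 d2 d3 d4 : int) :
  d0%:~R + d1%:~R * xi + d2%:~R * xi ^+ 2 + d3%:~R * xi ^+ 3 + d4%:~R * xi ^+ 4
    \is Num.real -> d3 = - d2 /\ d4 = - d1.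
Proof.
set x := _ + _ => /CrealP x_conj.
have conj_x : x^* = d0%:~R - d1%:~R * xi ^+ 4 - d2%:~R * xi ^+ 3
                    - d3%:~R * xi ^+ 2 - d4%:~R * xi.
  have conj_term (d : int) k : (d%:~R * xi ^+ k)^* = d%:~R * xi^* ^+ k.
    by rewrite rmorphM rmorph_int rmorphXn.
  rewrite /x -[xi in d1%:~R * xi]expr1 !rmorphD /= !conj_term !conj_xiX //.
  by rewrite rmorph_int; ring.
have : (xi + xi ^+ 4) * ((d1 + d4)%:~R + (d2 + d3)%:~R * tau) = 0.
  have -> : (xi + xi ^+ 4) * ((d1 + d4)%:~R + (d2 + d3)%:~R * tau)
          = (d1 + d4)%:~R * (xi + xi ^+ 4)
            + (d2 + d3)%:~R * ((xi + xi ^+ 4) * tau) by ring.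
  by rewrite -xi2_add_xi3 -(subrr x) -{2}x_conj conj_x /x !intrD; ring.
move/eqP; rewrite mulf_eq0 (negbTE xi_add_xi4_neq0) => /eqP coord0.
have [] : d1 + d4 = 0 /\ d2 + d3 = 0.
  by apply: tau_coord_inj; rewrite coord0 mulr0z mul0r addr0.
lia.
Qed.

Lemma L_golden_repr n x : L n x -> exists d0 d1 d2 : int,
  x = (d0 - d2)%:~R + (d1 + d2)%:~R * tau /\ (`|d0| + 2 * `|d1| + 2 * `|d2| <= n)%N.
Proof.
case=> x_real [c [c_le x_def]].
pose f k := c (inord k).
have cE (j : 'I_10) : c j = f j by rewrite /f inord_val.
(* k.+4.+1 rather than k + 5, so that d 3%N mentions f 8 syntactically for lia *)
pose d k : int := (f k)%:Z - (f k.+4.+1)%:Z.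
have x_fold : x = (d 0%N)%:~R + (d 1%N)%:~R * xi + (d 2%N)%:~R * xi ^+ 2
                  + (d 3%N)%:~R * xi ^+ 3 + (d 4%N)%:~R * xi ^+ 4.
  rewrite x_def; under eq_bigr do rewrite cE.
  rewrite -(big_mkord xpredT (fun j => (f j)%:R * xi ^+ j)) unlock /=.
  rewrite (exprD xi 5 1) (exprD xi 5 2) (exprD xi 5 3) (exprD xi 5 4) xi5 /d !intrB.
  ring.
have [d3E d4E] : d 3%N = - d 2%N /\ d 4%N = - d 1%N.
  by move: x_real; rewrite x_fold; apply: real_xi_comb.
exists (d 0%N), (d 1%N), (d 2%N); split.
  rewrite x_fold d3E d4E.
  transitivity ((d 0%N)%:~R + (d 1%N)%:~R * (xi - xi ^+ 4)
                + (d 2%N)%:~R * (xi ^+ 2 - xi ^+ 3)).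
    by rewrite !intrN; ring.
  by rewrite xi_sub_xi4 xi2_sub_xi3 intrB intrD; ring.
move: c_le; under eq_bigr do rewrite cE.
rewrite -(big_mkord xpredT f) unlock /=.
move: d3E d4E; rewrite /d; lia.
Qed.

Lemma Sigma_Icc_not_L n (a b : int) :
  (forall t : algR, t ^+ 2 = t + 1 -> `|a%:~R + b%:~R * t| <= n%:R) ->
  (forall d0 d1 d2 : int, a = d0 - d2 -> b = d1 + d2 ->
     (n < `|d0| + 2 * `|d1| + 2 * `|d2|)%N) ->
  exists x, Sigma (Icc n) x /\ Icc n x /\ ~ L n x.
Proof.
move=> /golden_Sigma_Icc[Sigma_x Icc_x] cost_gt.
exists (a%:~R + b%:~R * tau); do !split=> //.
case/L_golden_repr=> d0 [d1 [d2 [/tau_coord_inj[aE bE]]]].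
by rewrite leqNgt cost_gt.
Qed.

Theorem lemma6p10 (n : nat) (hn : (3 <= n)%N) :
  (forall x : algC, L n x -> Sigma (Icc n) x /\ Icc n x) /\
  (exists x : algC, Sigma (Icc n) x /\ Icc n x /\ ~ L n x).
Proof.
split=> [x /L_golden_repr [d0 [d1 [d2 [-> cost_le]]]] | ].
  apply: golden_Sigma_Icc => t /normr_golden_le2[t_le2 t1_le2].
  by apply: le_trans (normr_comb_le _ _ _ t_le2 t1_le2) _; rewrite ler_nat.
have [-> | n_ge4] : n = 3%N \/ (4 <= n)%N by lia.
  apply: (@Sigma_Icc_not_L 3 (-1) 2) => [t t_golden | d0 d1 d2]; last by lia.
  by rewrite ler_norml; apply/andP; split; nra.
apply: (@Sigma_Icc_not_L n (2 - n%:Z) 3) => [t t_golden | d0 d1 d2]; last by lia.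
have n_ge4R : 4 <= n%:R :> algR by rewrite ler_nat.
by rewrite ler_norml intrB; apply/andP; split; nra.
Qed.
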